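(* Suppose RLSVI (as in the context) is applied with parameters $(\lambda,v,\bar\theta)$ with $v/\lambda=\beta\geq 2$, $v=H^2$ and $\bar\theta = H\mathbf{1}$ (all entries equal to $H$). Then for every $L\in\mathbb{N}$, \[ \mathbb{E}\Big[\max_{\ell\le L,\ t<H}\|V_{Q_{\ell,t+1}}\|_\infty\Big] \leq 2H + H^2\sqrt{\log(1+|\mathcal{X}||\mathcal{A}|HL)}. \]
   Context: Setting: episodic MDP with finite state set $\mathcal{X}$, finite action set $\mathcal{A}$, horizon $H$; in episode $k$ and period $t\in\{0,\dots,H-1\}$ the agent is in $x^k_t$, takes $a^k_t$ and observes an outcome $(r^k_{t+1},x^k_{t+1})\in\{0,1\}\times\mathcal{X}$ (rewards in $\{0,1\}$). RLSVI with parameters $\bar\theta$, $v,\lambda>0$: $D_{\ell-1}(t,x,a)$ is the multiset of outcomes from episodes $k<\ell$ with $x^k_t=x,a^k_t=a$, $n_\ell(t,x,a)$ its size, $\sigma^2_\ell(t,x,a) = (1/\lambda+n_\ell(t,x,a)/v)^{-1}$, $w_\ell(t,x,a)=\sigma_\ell(t,x,a)\xi_{\ell,t,x,a}$ with $\xi$'s i.i.d. standard normal independent of everything else; \[F_{\ell,t}Q(x,a) = \sigma^2_\ell(t,x,a)\Big(\frac{\bar\theta_{t,x,a}}{\lambda}+\frac1v\sum_{(r,x')\in D_{\ell-1}(t,x,a)}\big(r+\max_{a'}Q(x',a')\big)\Big)+w_\ell(t,x,a);\] $Q_{\ell,H}=0$, $Q_{\ell,t}=F_{\ell,t}Q_{\ell,t+1}$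 for $t<H$; actions are greedy w.r.t. $Q_{\ell,t}$. For $Q\in\mathbb{R}^{\mathcal{X}\times\mathcal{A}}$, $V_Q(r,x') = r+\max_{a'}Q(x',a')$ is a function on $\{0,1\}\times\mathcal{X}$ and $\|\cdot\|_\infty$ is its sup norm. *)

From HB Require Import structures.
From mathcomp Require Import all_boot all_order all_algebra.
From mathcomp Require Import all_classical all_reals all_analysis.
From mathcomp Require Import normal_distribution.

Set Implicit Arguments.
Unset Strict Implicit.
Unset Printing Implicit Defensive.
Import Order.TTheory GRing.Theory Num.Theory.

Local Open Scope classical_set_scope.
Local Open Scope ring_scope.

Definition mutually_independent {d} {T : measurableType d} {R : realType}
    (P : probability T R) (I : eqType) (E : I -> set (set T)) : Prop :=
  forall (J : seq I) (B : I -> set T), uniq J ->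
    (forall i, i \in J -> E i (B i)) ->
    P (\big[setI/setT]_(i <- J) B i) = (\big[*%E/1%E]_(i <- J) P (B i))%E.

(* outcome (r, x') with r in {0,1} (encoded as bool) *)
Definition outcome (X : finType) := (bool * X)%type.
(* one transition of an episode: (x_t, a_t, (r_{t+1}, x_{t+1})) *)
Definition step (X A : finType) := (X * A * outcome X)%type.
(* an episode: period t |-> transition at period t (only t < H is used) *)
Definition episode (X A : finType) := nat -> step X A.

Definition maxA {R : realType} {A : finType} (f : A -> R) : R :=
  match [pick a : A] with
  | Some a0 => \big[Num.max/f a0]_(a : A) f a
  | None => 0
  end.

Definition VQ {R : realType} {X A : finType} (Q : X -> A -> R) (o : outcome X) : R :=
  (o.1)%:R + maxA (Q o.2).

Definition supnormV {R : realType} {X A : finType} (Q : X -> A -> R) : R :=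
  \big[Num.max/0]_(o : outcome X) `|VQ Q o|.

Definition Dset {X A : finType} (hist : seq (episode X A)) (t : nat) (x : X) (a : A)
  : seq (outcome X) :=
  [seq (e t).2 | e <- hist & ((e t).1.1 == x) && ((e t).1.2 == a)].

(* the operator F_{l,t} applied to Q, with noise xi_l (standard normals)
   and prior mean thetabar *)
Definition Fop {R : realType} {X A : finType} (lam v : R) (thetabar : nat -> X -> A -> R)
    (hist : seq (episode X A)) (xil : nat -> X -> A -> R) (t : nat)
    (Q : X -> A -> R) : X -> A -> R :=
  fun x a =>
    let D := Dset hist t x a in
    let s2 := (lam^-1 + (size D)%:R / v)^-1 in
    s2 * (thetabar t x a / lam + v^-1 * \sum_(o <- D) VQ Q o)
    + Num.sqrt s2 * xil t x a.

(* Qrev k = Q_{H-k}:  Q_H = 0,  Q_t = F_t Q_{t+1} *)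
Fixpoint Qrev {R : realType} {X A : finType} (H : nat) (lam v : R)
    (thetabar : nat -> X -> A -> R) (hist : seq (episode X A))
    (xil : nat -> X -> A -> R) (k : nat) : X -> A -> R :=
  match k with
  | 0 => fun _ _ => 0
  | k'.+1 => Fop lam v thetabar hist xil (H - k'.+1)
               (Qrev H lam v thetabar hist xil k')
  end.

(* Q_{l,t} computed from the data hist = episodes 1..l-1 and noise xil = xi_l *)
Definition Qfun {R : realType} {X A : finType} (H : nat) (lam v : R)
    (thetabar : nat -> X -> A -> R) (hist : seq (episode X A))
    (xil : nat -> X -> A -> R) (t : nat) : X -> A -> R :=
  Qrev H lam v thetabar hist xil (H - t).

(* state at period t of an episode run greedily w.r.t. Q, starting at x0,
   where the environment answers (t, x, a) with outcome Yl t x a *)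
Fixpoint run_state {R : realType} {X A : finType} (greedy : (A -> R) -> A)
    (Q : nat -> X -> A -> R) (Yl : nat -> X -> A -> outcome X) (x0 : X)
    (t : nat) : X :=
  match t with
  | 0 => x0
  | t'.+1 => let xt := run_state greedy Q Yl x0 t' in
             (Yl t' xt (greedy (Q t' xt))).2
  end.

Definition run_episode {R : realType} {X A : finType} (greedy : (A -> R) -> A)
    (Q : nat -> X -> A -> R) (Yl : nat -> X -> A -> outcome X) (x0 : X)
    : episode X A :=
  fun t => let xt := run_state greedy Q Yl x0 t in
           let act := greedy (Q t xt) in
           (xt, act, Yl t xt act).

(* history of episodes 1..m (episodes are numbered from 1) *)
Fixpoint history {R : realType} {X A : finType} (H : nat) (lam v : R)
    (thetabar : nat -> X -> A -> R) (greedy : (A -> R) -> A)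
    (xi : nat -> nat -> X -> A -> R) (Y : nat -> nat -> X -> A -> outcome X)
    (X0 : nat -> X) (m : nat) : seq (episode X A) :=
  match m with
  | 0 => [::]
  | m'.+1 =>
      let h := history H lam v thetabar greedy xi Y X0 m' in
      rcons h (run_episode greedy (Qfun H lam v thetabar h (xi m'.+1))
                 (Y m'.+1) (X0 m'.+1))
  end.

Definition RLSVI_Q {R : realType} {X A : finType} (H : nat) (lam v : R)
    (thetabar : nat -> X -> A -> R) (greedy : (A -> R) -> A)
    (xi : nat -> nat -> X -> A -> R) (Y : nat -> nat -> X -> A -> outcome X)
    (X0 : nat -> X) (l t : nat) : X -> A -> R :=
  Qfun H lam v thetabar (history H lam v thetabar greedy xi Y X0 l.-1) (xi l) t.

(* Fix the noise, let [Xi] be the largest [|xi|] that is used and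
   [c = sqrt lam * Xi].  Each application of [Fop] is the convex combination,
   with weight [al] on the prior mean [H], of [H] and an empirical mean of
   [V_Q], plus noise of size at most [sqrt al * c].  Backward induction bounds
   [||V_(Q_(t+1))||] by [2H - 1 + c (H + 2) / 4]: every period adds the reward
   1, and once the bound [B] satisfies [B - H >= c] the noise adds at most
   [sqrt al * c - al * (B - H) <= c / 4].  For [N] standard normals,
   [1 + x <= e^x] and [e^(s Xi) <= 1 + sum (e^(s xi) + e^(-s xi))] give
   [E Xi <= 2 sqrt (ln (1 + N))] for [s = 2 sqrt (ln (1 + N))]; finally
   [lam <= H^2 / 2] yields [sqrt lam (H + 2) / 2 <= H^2].  The bound on [V]
   holds for every realisation and [E Xi] only involves the marginal laws of
   the [xi]. *)

From Pilot Require Import Defs.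
From mathcomp Require Import all_boot all_order all_algebra.
From mathcomp Require Import all_classical all_reals all_analysis.
From mathcomp Require Import normal_distribution measurable_realfun.
From mathcomp Require Import ring lra zify.
Import Order.TTheory GRing.Theory Num.Theory.
Local Open Scope classical_set_scope.
Local Open Scope ring_scope.

Section integral_density.
Import HBNNSimple.
Local Open Scope ereal_scope.
Context {d} {T : measurableType d} {R : realType}.
Variables (mu nu : {measure set T -> \bar R}).
Context {g : T -> R}.
Hypotheses (mg : measurable_fun setT g) (g0 : forall x, (0 <= g x)%R)
  (nuE : forall A, measurable A -> nu A = \int[mu]_(x in A) (g x)%:E).

Let integral_indic_density (A : set T) : measurable A ->
  \int[mu]_x ((\1_A x)%:E * (g x)%:E) = nu A.
Proof.
move=> mA; rewrite nuE // [RHS]integral_mkcond; apply: eq_integral => x _.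
by rewrite /patch indicE; case: (x \in A); rewrite ?mul1e ?mul0e.
Qed.

Let integral_nnsfun_density (h : {nnsfun T >-> R}) :
  \int[nu]_x (h x)%:E = \int[mu]_x ((h x)%:E * (g x)%:E).
Proof.
have mEg : measurable_fun setT (EFin \o g) by exact/measurable_EFinP.
under [LHS]eq_integral => x _ do rewrite fimfunE -fsumEFin//.
rewrite [LHS]ge0_integral_fsum//; last 2 first.
  - by move=> r; exact/measurable_EFinP/measurableT_comp.
  - by move=> n x _; rewrite EFinM nnfun_muleindic_ge0.
under [RHS]eq_integral.
  move=> x _; rewrite fimfunE -fsumEFin// ge0_mule_fsuml; last first.
    by move=> r; rewrite EFinM nnfun_muleindic_ge0.
  over.
rewrite [RHS]ge0_integral_fsum//; last 2 first.
  - move=> r; apply: emeasurable_funM; last exact: mEg.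
    by apply/measurable_EFinP; do 2 apply/measurableT_comp => //.
  - move=> n x _; apply: mule_ge0; last by rewrite lee_fin.
    by rewrite EFinM nnfun_muleindic_ge0.
apply: eq_fsbigr => r _.
have [r0|r0] := leP 0%R r; last first.
  rewrite preimage_nnfun0// indic0.
  rewrite integral0_eq; last by move=> x _; rewrite /= mulr0.
  by rewrite integral0_eq// => x _; rewrite /= mulr0 mul0e.
rewrite integralZl_indic_nnsfun// integral_indic// setIT.
under eq_integral do rewrite EFinM -muleA.
rewrite ge0_integralZl//.
- by rewrite integral_indic_density//; exact: measurable_funPTI.
- apply: emeasurable_funM => //.
  by apply/measurable_EFinP; apply/measurable_indic; exact: measurable_funPTI.
- by move=> x _; rewrite mule_ge0// lee_fin.
Qed.

Lemma ge0_integral_density (f : T -> \bar R) :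
  measurable_fun setT f -> (forall x, 0 <= f x) ->
  \int[nu]_x f x = \int[mu]_x (f x * (g x)%:E).
Proof.
move=> mf f0; pose f_ := nnsfun_approx measurableT mf.
have f_nd x : {homo f_^~ x : m n / (m <= n)%N >-> (m <= n)%R}.
  by move=> m n mn; exact/lefP/nd_nnsfun_approx.
transitivity (limn (fun n => \int[nu]_x (f_ n x)%:E)).
  rewrite -monotone_convergence//=.
  - apply: eq_integral => x _; apply/esym/cvg_lim => //=.
    exact: cvg_nnsfun_approx.
  - by move=> n; exact/measurable_EFinP/measurable_funTS.
  - by move=> n x _; rewrite lee_fin.
  - by move=> x _ m n mn; rewrite lee_fin f_nd.
under eq_fun do rewrite integral_nnsfun_density.
rewrite -monotone_convergence//=.
- apply: eq_integral => x _; apply/cvg_lim => //=.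
  by apply: cvgeZr => //; exact: cvg_nnsfun_approx.
- move=> n; apply: emeasurable_funM; last exact/measurable_EFinP.
  exact/measurable_EFinP/measurable_funTS.
- by move=> n x _; rewrite mule_ge0// lee_fin.
- by move=> x _ m n mn; rewrite lee_wpmul2r ?lee_fin ?f_nd.
Qed.

End integral_density.

Lemma measurable_expR_scale {d} {T : measurableType d} {R : realType}
    {f : T -> R} (s : R) :
  measurable_fun setT f -> measurable_fun setT (fun w => (expR (s * f w))%:E).
Proof.
move=> mf; apply/measurable_EFinP.
apply: (measurableT_comp (f := expR) (g := fun w => s * f w)).
  exact: measurable_expR.
exact: measurable_funM.
Qed.

Lemma normal_prob_mgf (R : realType) (s : R) :
  (\int[normal_prob 0 1]_x (expR (s * x))%:E = (expR (s ^+ 2 / 2))%:E)%E.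
Proof.
rewrite (ge0_integral_density lebesgue_measure (normal_prob 0 1)
  (measurable_normal_pdf 0 1) (normal_pdf_ge0 0 1)) //; last first.
  apply/measurable_EFinP; apply: measurableT_comp; first exact: measurable_expR.
  exact: mulrl_measurable.
transitivity (\int[lebesgue_measure]_x
    ((expR (s ^+ 2 / 2))%:E * (normal_pdf s 1 x)%:E))%E.
  apply: eq_integral => x _; rewrite -!EFinM; congr EFin.
  rewrite !normal_pdfE ?oner_neq0 //= /normal_fun mulrCA [RHS]mulrCA.
  by congr (_ * _); rewrite -!expRD; congr expR; rewrite expr1n; field.
rewrite ge0_integralZl ?integral_normal_pdf ?mule1//.
- by apply/measurable_EFinP; exact: measurable_normal_pdf.
- by move=> x _; rewrite lee_fin normal_pdf_ge0.
Qed.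

Lemma expR_bigmax_abs_le {R : realType} {I : finType} (f : I -> R) (s : R) :
  0 <= s -> expR (s * \big[Num.max/0]_i `|f i|) <=
    1 + \sum_i (expR (s * f i) + expR (- s * f i)).
Proof.
move=> s0; pose K (m S : R) := expR (s * m) <= 1 + S /\ 0 <= S.
suff : K (\big[Num.max/0]_i `|f i|) (\sum_i (expR (s * f i) + expR (- s * f i))).
  by case.
apply: big_ind2 => [|m1 S1 m2 S2 [e1 S1_ge0] [e2 S2_ge0]|i _].
- by rewrite /K mulr0 expR0 addr0.
- by split; [rewrite maxr_pMr // /Order.max; case: ifP => _ | ]; lra.
have e1 := expR_gt0 (s * f i); have e2 := expR_gt0 (- s * f i).
split; last lra.
by case: (ler0P (f i)) => _; rewrite ?mulrN -?mulNr; lra.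
Qed.

Lemma bigmax_abs_le_expR_sum {R : realType} {I : finType} (f : I -> R) (s L : R) :
  0 < s -> \big[Num.max/0]_i `|f i| <= (expR (- L) + L - 1) / s +
    expR (- L) / s * \sum_i (expR (s * f i) + expR (- s * f i)).
Proof.
move=> s_gt0; set M := \big[Num.max/0]_i `|f i|; set S := \sum_i _.
have eM : expR (s * M) * expR (- L) <= (1 + S) * expR (- L).
  by rewrite ler_wpM2r ?expR_ge0 ?expR_bigmax_abs_le ?ltW.
have := expR_ge1Dx (s * M - L); rewrite expRD => e.
have -> : (expR (- L) + L - 1) / s + expR (- L) / s * S =
    (expR (- L) + L - 1 + expR (- L) * S) / s by field; rewrite gt_eqF.
by rewrite ler_pdivlMr // mulrC; lra.
Qed.

Lemma measurable_bigmax_abs {d} {T : measurableType d} {R : realType} {I : finType}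
    (Z : I -> T -> R) : (forall i, measurable_fun setT (Z i)) ->
  measurable_fun setT (fun w => \big[Num.max/0]_i `|Z i w|).
Proof.
move=> mZ; elim: (index_enum I) => [|i r IH].
  by under eq_fun do rewrite big_nil; exact: measurable_cst.
under eq_fun do rewrite big_cons; apply: measurable_maxr => //.
exact: measurableT_comp (mZ i).
Qed.

Section expectation_bounds.
Context {d} {T : measurableType d} {R : realType} (P : probability T R).

Lemma standard_normal_mgf (Z : T -> R) : measurable_fun setT Z ->
  (forall B, measurable B -> P (Z @^-1` B) = normal_prob 0 1 B) ->
  forall s : R, (\int[P]_w (expR (s * Z w))%:E = (expR (s ^+ 2 / 2))%:E)%E.
Proof.
move=> mZ PZ s; rewrite -normal_prob_mgf.
pose Z' : T -> measurableTypeR R := Z.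
have mZ' : measurable_fun setT Z' by exact: mZ.
have mexp : measurable_fun setT (fun x : measurableTypeR R => (expR (s * x))%:E).
  apply/measurable_EFinP; apply: measurableT_comp; first exact: measurable_expR.
  exact: mulrl_measurable.
transitivity (\int[pushforward P Z']_x (expR (s * x))%:E)%E; last first.
  by apply: eq_measure_integral => A mA _; apply: PZ; exact: mA.
by rewrite ge0_integral_pushforward// => x _; rewrite lee_fin expR_ge0.
Qed.

Lemma ge0_le_integral_nonmeasurable (f g : T -> \bar R) :
  (forall w, 0 <= f w)%E -> (forall w, f w <= g w)%E ->
  (\int[P]_w f w <= \int[P]_w g w)%E.
Proof.
move=> f0 fg; rewrite !ge0_integralE//; last first.
  by move=> w _; exact: le_trans (f0 w) (fg w).
apply: ereal_sup_le => _ [h hf <-]; exists h => //= w.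
by apply: le_trans (hf w) _; rewrite /patch /=; case: ifP => // _; exact: fg.
Qed.

Lemma le_expectation_affine (F Z : T -> R) (a b z : R) :
  0 <= a -> 0 <= b -> measurable_fun setT Z -> (forall w, 0 <= Z w) ->
  (forall w, 0 <= F w <= a + b * Z w) ->
  (\int[P]_w (Z w)%:E <= z%:E)%E -> (\int[P]_w (F w)%:E <= (a + b * z)%:E)%E.
Proof.
move=> a0 b0 mZ Z0 FZ EZ.
apply: (@le_trans _ _ (\int[P]_w (a + b * Z w)%:E)%E).
  by apply: ge0_le_integral_nonmeasurable => w; rewrite lee_fin; case/andP: (FZ w).
have bZ0 w : (0 <= (b * Z w)%:E)%E by rewrite lee_fin mulr_ge0.
have mbZ : measurable_fun setT (fun w => (b * Z w)%:E).
  exact/measurable_EFinP/measurable_funM.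
under eq_integral do rewrite EFinD.
rewrite ge0_integralD// ?lee_fin// integral_cst//= probability_setT mule1 EFinD.
rewrite leeD2l//; under eq_integral do rewrite EFinM.
rewrite ge0_integralZl//; first by rewrite EFinM lee_wpmul2l ?lee_fin.
- exact/measurable_EFinP.
- by move=> w _; rewrite lee_fin.
Qed.

Lemma expectation_sum_expR_standard_normal (I : finType) (Z : I -> T -> R) :
  (forall i, measurable_fun setT (Z i)) ->
  (forall i B, measurable B -> P (Z i @^-1` B) = normal_prob 0 1 B) ->
  forall s : R, (\int[P]_w (\sum_i (expR (s * Z i w) + expR (- s * Z i w)))%:E
    = (#|I|%:R * (2 * expR (s ^+ 2 / 2)))%:E)%E.
Proof.
move=> mZ PZ s.
have mE i (r : R) := measurable_expR_scale r (mZ i).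
have E0 i (r : R) w : (0 <= (expR (r * Z i w))%:E)%E by rewrite lee_fin expR_ge0.
under eq_integral do rewrite -sumEFin; under eq_integral do under eq_bigr do rewrite EFinD.
rewrite ge0_integral_sum//; first last.
- by move=> i w _; exact: adde_ge0.
- by move=> i; exact: emeasurable_funD.
under eq_bigr do rewrite ge0_integralD// !(standard_normal_mgf _ (mZ _) (PZ _)) sqrrN.
by rewrite sumEFin sumr_const !mulr_natl -mulr2n.
Qed.

Lemma expectation_bigmax_abs_standard_normal_le (I : finType) (Z : I -> T -> R)
    (s L : R) :
  (forall i, measurable_fun setT (Z i)) ->
  (forall i B, measurable B -> P (Z i @^-1` B) = normal_prob 0 1 B) -> 0 < s ->
  (\int[P]_w (\big[Num.max/0]_i `|Z i w|)%:E <=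
    (((1 + #|I|%:R * (2 * expR (s ^+ 2 / 2))) * expR (- L) + L - 1) / s)%:E)%E.
Proof.
move=> mZ PZ s_gt0.
pose S w := \sum_i (expR (s * Z i w) + expR (- s * Z i w)).
have /eqP := expectation_sum_expR_standard_normal _ _ mZ PZ s.
rewrite eq_le => /andP[ES _].
apply: le_trans (le_expectation_affine _ S ((expR (- L) + L - 1) / s)
  (expR (- L) / s) _ _ _ _ _ _ ES) _.
- by rewrite divr_ge0 ?(ltW s_gt0) //; have := expR_ge1Dx (- L); lra.
- by rewrite divr_ge0 ?expR_ge0 ?(ltW s_gt0).
- apply: measurable_sum => i; apply: measurable_funD;
    by apply/measurable_EFinP; exact: measurable_expR_scale _ (mZ i).
- by move=> w; apply: sumr_ge0 => i _; rewrite addr_ge0 ?expR_ge0.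
- by move=> w; rewrite bigmax_ge_id bigmax_abs_le_expR_sum.
rewrite lee_fin le_eqVlt; apply/orP; left; apply/eqP.
by field; rewrite gt_eqF.
Qed.

Lemma expectation_bigmax_abs_standard_normal (I : finType) (Z : I -> T -> R) :
  (forall i, measurable_fun setT (Z i)) ->
  (forall i B, measurable B -> P (Z i @^-1` B) = normal_prob 0 1 B) ->
  (\int[P]_w (\big[Num.max/0]_i `|Z i w|)%:E <=
    (2 * Num.sqrt (ln (1 + #|I|%:R)))%:E)%E.
Proof.
move=> mZ PZ; have [I0|I_gt0] := eqVneq #|I| 0%N.
  rewrite I0 addr0 ln1 sqrtr0 mulr0.
  apply: (@le_trans _ _ (\int[P]_w (cst 0 w))%E); last by rewrite integral0.
  apply: ge0_le_integral_nonmeasurable => w; first by rewrite lee_fin bigmax_ge_id.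
  rewrite /= lee_fin; apply: bigmax_le => // i _.
  by move: I0; rewrite (cardD1 i) inE.
set y := 1 + #|I|%:R; set l := ln y; set s := 2 * Num.sqrt l.
have y2 : 2 <= y by rewrite /y lerD2l ler1n lt0n.
have expl : expR l = y by rewrite lnK // posrE; lra.
have l_gt0 : 0 < l by rewrite ln_gt0 //; lra.
have s_gt0 : 0 < s by rewrite mulr_gt0 // sqrtr_gt0.
have ss : s * s = 4 * l by rewrite -expr2 exprMn sqr_sqrtr; lra.
apply: le_trans (expectation_bigmax_abs_standard_normal_le _ _ s (4 * l) mZ PZ s_gt0) _.
have -> : s ^+ 2 / 2 = 2%:R * l by rewrite expr2 ss; field.
rewrite expRN !expRM_natl expl lee_fin ler_pdivrMr // ss.
suff : (1 + #|I|%:R * (2 * y ^+ 2)) / y ^+ 4 <= 1 by lra.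
have y4_gt0 : 0 < y ^+ 4 by rewrite exprn_gt0 //; lra.
rewrite ler_pdivrMr // mul1r.
have : 1 <= y ^+ 2 by nra.
rewrite /y; nra.
Qed.

End expectation_bounds.

Lemma sqrt_mul_sub_le_quarter (R : realType) (al c d : R) :
  0 <= al -> 0 <= c -> c <= d -> Num.sqrt al * c - al * d <= c / 4.
Proof.
move=> al0 c0 cd; set u := Num.sqrt al.
have u0 : 0 <= u by exact: sqrtr_ge0.
have -> : al = u ^+ 2 by rewrite sqr_sqrtr.
have : 0 <= c * (u - 1 / 2) ^+ 2 by rewrite mulr_ge0 ?sqr_ge0.
have : u ^+ 2 * c <= u ^+ 2 * d by rewrite ler_wpM2l ?sqr_ge0.
nra.
Qed.

Section value_bounds.
Context {R : realType} {X A : finType}.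
Implicit Types (Q : X -> A -> R) (b : R).

Lemma abs_maxA_le (f : A -> R) b : 0 <= b -> (forall a, `|f a| <= b) ->
  `|Defs.maxA f| <= b.
Proof.
move=> b0 fb; rewrite /Defs.maxA; case: pickP => [a0 _|_]; last by rewrite normr0.
by apply: (big_ind (fun y => `|y| <= b)) => // x y; rewrite /Order.max; case: ifP.
Qed.

Lemma abs_VQ_le Q b : 0 <= b -> (forall x a, `|Q x a| <= b) ->
  forall o, `|VQ Q o| <= 1 + b.
Proof.
move=> b0 Qb [r x]; rewrite /VQ /=; apply: le_trans (ler_normD _ _) _.
by apply: lerD; [case: r; rewrite ?normr1 ?normr0 | exact: abs_maxA_le].
Qed.

Lemma supnormV_le Q b : 0 <= b -> (forall o, `|VQ Q o| <= b) -> supnormV Q <= b.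
Proof. by move=> b0 Vb; apply: bigmax_le. Qed.

Lemma supnormV0 : supnormV (fun (_ : X) (_ : A) => 0 : R) <= 1.
Proof.
apply: supnormV_le => // o; rewrite -[1]addr0.
by apply: abs_VQ_le => // x a; rewrite normr0.
Qed.

Lemma abs_sum_VQ_le Q b (D : seq (outcome X)) : (forall o, `|VQ Q o| <= b) ->
  `|\sum_(o <- D) VQ Q o| <= (size D)%:R * b.
Proof.
move=> Vb; elim: D => [|o D IH]; first by rewrite big_nil normr0 mul0r.
rewrite big_cons /= -addn1 natrD mulrDl mul1r addrC.
by apply: le_trans (ler_normD _ _) _; exact: lerD.
Qed.

End value_bounds.

Section RLSVI_value_bounds.
Variables (R : realType) (X A : finType) (H : nat) (lam v : R).
Variables (hist : seq (episode X A)) (xil : nat -> X -> A -> R) (Xi : R).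
Hypotheses (lam_gt0 : 0 < lam) (v_gt0 : 0 < v) (Xi_ge0 : 0 <= Xi).
Hypothesis xil_le : forall t x a, (t < H)%N -> `|xil t x a| <= Xi.

Let prior : nat -> X -> A -> R := fun _ _ _ => H%:R.
Let c := Num.sqrt lam * Xi.
Let Qr := Qrev H lam v prior hist xil.

Let c_ge0 : 0 <= c.
Proof. by rewrite mulr_ge0 ?sqrtr_ge0. Qed.

(* [al] is the weight of the prior mean [H] in [Fop]; the noise has variance
   [al * lam]. *)
Lemma abs_Fop_le t Q B x a : (t < H)%N -> (forall o, `|VQ Q o| <= B) ->
  exists2 al, 0 <= al <= 1 &
    `|Fop lam v prior hist xil t Q x a| <= B - al * (B - H%:R) + Num.sqrt al * c.
Proof.
move=> tH VB; rewrite /Fop /prior.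
set n : R := (size (Dset hist t x a))%:R; set s2 := (lam^-1 + n / v)^-1.
have n_ge0 : 0 <= n by exact: ler0n.
have s2_gt0 : 0 < s2.
  by rewrite invr_gt0 ltr_wpDr ?invr_gt0 // divr_ge0 // ltW.
have s2v_ge0 : 0 <= s2 / v by rewrite divr_ge0 ?ltW.
have weights : s2 / lam + s2 / v * n = 1.
  rewrite /s2; field.
  rewrite (gt_eqF v_gt0) (gt_eqF lam_gt0) gt_eqF //.
  by rewrite ltr_wpDr // mulr_ge0 ?ler0n ?(ltW lam_gt0).
have s2vn_ge0 : 0 <= s2 / v * n by rewrite mulr_ge0.
exists (s2 / lam).
  by rewrite divr_ge0 ?(ltW s2_gt0) ?(ltW lam_gt0) //=; lra.
have -> : s2 * (H%:R / lam + v^-1 * \sum_(o <- Dset hist t x a) VQ Q o) =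
    s2 / lam * H%:R + s2 / v * \sum_(o <- Dset hist t x a) VQ Q o.
  by ring.
have -> : B - s2 / lam * (B - H%:R) = s2 / lam * H%:R + s2 / v * (n * B).
  by rewrite -{1}[B]mul1r -weights; ring.
have alH_ge0 : 0 <= s2 / lam * H%:R by rewrite mulr_ge0 ?divr_ge0 ?(ltW s2_gt0) ?(ltW lam_gt0).
rewrite -!addrA; apply: le_trans (ler_normD _ _) _; rewrite ger0_norm // lerD2l.
apply: le_trans (ler_normD _ _) _; apply: lerD.
  by rewrite normrM ger0_norm // ler_wpM2l // abs_sum_VQ_le.
rewrite normrM ger0_norm ?sqrtr_ge0 // /c mulrA -sqrtrM ?divr_ge0 ?(ltW s2_gt0) ?(ltW lam_gt0) //.
by rewrite divfK ?gt_eqF // ler_wpM2l ?sqrtr_ge0 ?xil_le.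
Qed.

Lemma abs_VQ_Qrev_le k : (k < H)%N ->
  forall o, `|VQ (Qr k.+1) o| <= H%:R + k.+1%:R + c * (k%:R + 4) / 4.
Proof.
elim: k => [|k IH] kH o.
  have VQ0 o' : `|VQ (Qr 0) o'| <= H%:R.
    apply: le_trans (abs_VQ_le (Qr 0) 0 _ _ o') _ => //.
      by move=> x a; rewrite normr0.
    by rewrite addr0 ler1n.
  apply: le_trans (abs_VQ_le _ (H%:R + c) _ _ o) _.
  - by rewrite addr_ge0.
  - have tH : (H - 1 < H)%N by lia.
    move=> x a; have [al /andP[al0 al1] Fle] := abs_Fop_le _ _ _ x a tH VQ0.
    apply: le_trans Fle _; rewrite subrr mulr0 subr0 lerD2l.
    by rewrite ler_piMl // -sqrtr1 ler_sqrt.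
  - by rewrite add0r mulfK //; lra.
have k_ge0 := ler0n R k; have ck_ge0 := mulr_ge0 c_ge0 k_ge0.
have B_ge : H%:R + c <= H%:R + k.+1%:R + c * (k%:R + 4) / 4.
  by rewrite -natr1; lra.
have VQk := IH (ltnW kH).
apply: le_trans (abs_VQ_le _ (H%:R + k.+1%:R + c * (k%:R + 4) / 4 + c / 4) _ _ o) _.
- by rewrite addr_ge0 ?divr_ge0 // (le_trans _ B_ge) // addr_ge0.
- have tH : (H - k.+2 < H)%N by lia.
  move=> x a; have [al /andP[al0 _] Fle] := abs_Fop_le _ _ _ x a tH VQk.
  apply: le_trans Fle _; rewrite -addrA lerD2l addrC.
  by apply: sqrt_mul_sub_le_quarter => //; lra.
- by rewrite -!natr1; lra.
Qed.

Lemma supnormV_Qrev_le k : (1 < H)%N -> (k < H)%N ->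
  supnormV (Qr k) <= 2 * H%:R - 1 + c * (H%:R + 2) / 4.
Proof.
move=> H_gt1 kH; have H2 : 2 <= H%:R :> R by rewrite (ler_nat R 2).
have cH_ge0 : 0 <= c * (H%:R + 2) / 4 by rewrite divr_ge0 ?mulr_ge0 ?addr_ge0.
case: k kH => [|k] kH.
  by apply: le_trans (@supnormV0 R X A) _; lra.
apply: supnormV_le => [|o]; first lra.
apply: le_trans (abs_VQ_Qrev_le _ (ltnW kH) o) _.
have kH' : k.+2%:R <= H%:R :> R by rewrite ler_nat.
rewrite -!natr1 in kH'.
have ck_le : c * (k%:R + 4) <= c * (H%:R + 2) by rewrite ler_wpM2l //; lra.
rewrite -natr1; lra.
Qed.

End RLSVI_value_bounds.

Lemma bigmax_supnormV_le {R : realType} {X A : finType} (H L : nat)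
    (Q : nat -> nat -> X -> A -> R) (B : R) : 0 <= B ->
  (forall l t, (0 < l <= L)%N -> (t < H)%N -> supnormV (Q l t.+1) <= B) ->
  0 <= \big[Num.max/0]_(1 <= l < L.+1) \big[Num.max/0]_(0 <= t < H)
         supnormV (Q l t.+1) <= B.
Proof.
move=> B_ge0 QB; rewrite bigmax_ge_id big_nat_cond.
apply: bigmax_le => // l /andP[/andP[l_ge1 lL] _].
rewrite big_nat_cond; apply: bigmax_le => // t /andP[/andP[_ tH] _].
by apply: QB; rewrite ?l_ge1.
Qed.

Lemma bigmax_supnormV_RLSVI_Q_le {R : realType} {X A : finType} (H L : nat)
    (lam v : R) (greedy : (A -> R) -> A) (xi : nat -> nat -> X -> A -> R)
    (Y : nat -> nat -> X -> A -> outcome X) (X0 : nat -> X) (Xi : R) :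
  0 < lam -> 0 < v -> (1 < H)%N -> 0 <= Xi ->
  (forall l t x a, (0 < l <= L)%N -> (t < H)%N -> `|xi l t x a| <= Xi) ->
  0 <= \big[Num.max/0]_(1 <= l < L.+1) \big[Num.max/0]_(0 <= t < H)
         supnormV (RLSVI_Q H lam v (fun _ _ _ => H%:R) greedy xi Y X0 l t.+1)
    <= 2 * H%:R - 1 + Num.sqrt lam * (H%:R + 2) / 4 * Xi.
Proof.
move=> lam_gt0 v_gt0 H_gt1 Xi_ge0 xi_le.
have H1 : 1 <= H%:R :> R by rewrite ler1n ltnW.
apply: bigmax_supnormV_le => [|l t lL tH].
  by have := mulr_ge0 (mulr_ge0 (sqrtr_ge0 lam) (ler0n R 6)) Xi_ge0; nra.
rewrite (_ : _ / 4 * Xi = Num.sqrt lam * Xi * (H%:R + 2) / 4); last by ring.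
apply: supnormV_Qrev_le => //; last by lia.
by move=> t' x a t'H; exact: xi_le.
Qed.

Lemma bigmax_supnormV_RLSVI_Q_le1 {R : realType} {X A : finType} (H L : nat)
    (lam v : R) (greedy : (A -> R) -> A) (xi : nat -> nat -> X -> A -> R)
    (Y : nat -> nat -> X -> A -> outcome X) (X0 : nat -> X) :
  (H <= 1)%N ->
  0 <= \big[Num.max/0]_(1 <= l < L.+1) \big[Num.max/0]_(0 <= t < H)
         supnormV (RLSVI_Q H lam v (fun _ _ _ => H%:R) greedy xi Y X0 l t.+1) <= 1.
Proof.
move=> H_le1; apply: bigmax_supnormV_le => // l t _ tH.
by rewrite /RLSVI_Q /Qfun (_ : H - t.+1 = 0)%N; [exact: supnormV0 | lia].
Qed.

Lemma sqrt_mulD2_le_sqr {R : realType} (lam h : R) :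
  2 <= h -> 2 * lam <= h ^+ 2 -> Num.sqrt lam * (h + 2) / 2 <= h ^+ 2.
Proof.
move=> h2 lam_le; set q := Num.sqrt lam; have q_ge0 : 0 <= q := sqrtr_ge0 lam.
have q_le : q <= h.
  have [lam_lt0|lam_ge0] := ltP lam 0; first by rewrite /q ltr0_sqrtr //; lra.
  by rewrite -ler_sqr ?nnegrE ?sqr_sqrtr //; lra.
nra.
Qed.

Theorem mainTheorem9
  (R : realType) (d : measure_display) (T : measurableType d)
  (P : probability T R)
  (X A : finType) (H : nat)
  (* MDP: time-dependent outcome law p t x a and initial-state law mu0 *)
  (p : nat -> X -> A -> outcome X -> R) (mu0 : X -> R)
  (* RLSVI parameters *)
  (lam v : R)
  (* greedy action selection (arbitrary tie-breaking) *)
  (greedy : (A -> R) -> A)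
  (* randomness: noise xi_{l,t,x,a}; environment outcomes Y_{l,t,x,a} drawn
     when (x,a) is played at period t of episode l; initial states X0_l *)
  (xi : nat -> nat -> X -> A -> T -> R)
  (Y : nat -> nat -> X -> A -> T -> outcome X)
  (X0 : nat -> T -> X)
  (L : nat) :
  (forall f a, f a <= f (greedy f)) ->
  0 < lam -> 0 < v ->
  v = (H%:R) ^+ 2 ->
  2 <= v / lam ->
  (* xi's are standard normal random variables *)
  (forall l t x a, measurable_fun setT (xi l t x a)) ->
  (forall l t x a (B : set R), measurable B ->
     P (xi l t x a @^-1` B) = normal_prob 0 1 B) ->
  (* environment laws *)
  (forall l t x a o, measurable [set w | Y l t x a w = o]) ->
  (forall l t x a o, P [set w | Y l t x a w = o] = (p t x a o)%:E) ->
  (forall l s, measurable [set w | X0 l w = s]) ->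
  (forall l s, P [set w | X0 l w = s] = (mu0 s)%:E) ->
  (* all of these random variables are mutually independent *)
  mutually_independent P
    (fun i : (nat * nat * X * A) + (nat * nat * X * A) + nat =>
       match i with
       | inl (inl j) => [set S | exists B : set R, measurable B /\
                           S = xi j.1.1.1 j.1.1.2 j.1.2 j.2 @^-1` B]
       | inl (inr j) => [set S | exists B : set (outcome X),
                           S = Y j.1.1.1 j.1.1.2 j.1.2 j.2 @^-1` B]
       | inr l => [set S | exists B : set X, S = X0 l @^-1` B]
       end) ->
  (\int[P]_w
     (\big[Num.max/0]_(1 <= l < L.+1) \big[Num.max/0]_(0 <= t < H)
        supnormV (RLSVI_Q H lam v (fun _ _ _ => H%:R) greedy
                    (fun l' t' x a => xi l' t' x a w)
                    (fun l' t' x a => Y l' t' x a w)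
                    (fun l' => X0 l' w) l t.+1))%:E
   <= (2 * H%:R + H%:R ^+ 2 * Num.sqrt (ln (1 + (#|X| * #|A| * H * L)%:R)))%:E)%E.
Proof.
move=> _ lam_gt0 v_gt0 vH vlam mxi Pxi _ _ _ _ _.
have H_gt0 : (0 < H)%N.
  by rewrite lt0n; apply/eqP => H0; move: v_gt0; rewrite vH H0 mulr0n expr0n ltxx.
pose Z (i : 'I_L * 'I_H * X * A) := xi i.1.1.1.+1 i.1.1.2 i.1.2 i.2.
pose Xi w := \big[Num.max/0]_i `|Z i w|.
have xi_le w l t x a : (0 < l <= L)%N -> (t < H)%N -> `|xi l t x a w| <= Xi w.
  case: l => // l lL tH.
  exact: (le_bigmax 0 (fun i => `|Z i w|) (Ordinal lL, Ordinal tH, x, a)).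
have Xi_ge0 w : 0 <= Xi w by exact: bigmax_ge_id.
have mXi : measurable_fun setT Xi by apply: measurable_bigmax_abs => i; exact: mxi.
have := expectation_bigmax_abs_standard_normal P _ Z (fun=> mxi _ _ _ _) (fun=> Pxi _ _ _ _).
rewrite (_ : #|_| = #|X| * #|A| * H * L)%N; last by rewrite !card_prod !card_ord; ring.
set sl := Num.sqrt _ => EXi; have sl_ge0 : 0 <= sl := sqrtr_ge0 _.
have [H_le1|H_gt1] := leqP H 1.
(* For [H = 1] only [Q_{l,H} = 0] occurs; the general bound would be too weak. *)
  apply: le_trans (le_expectation_affine P _ Xi 1 0 _ _ _ mXi Xi_ge0 _ EXi) _ => //.
    by move=> w; rewrite mul0r addr0 bigmax_supnormV_RLSVI_Q_le1.
  by rewrite (_ : H = 1%N) ?lee_fin ?mul0r ?addr0 ?expr1n ?mul1r; [lra | lia].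
have h2 : 2 <= H%:R :> R by rewrite (ler_nat R 2).
have lam_le : 2 * lam <= H%:R ^+ 2 by rewrite -vH -ler_pdivlMr.
have noise_le := ler_wpM2r sl_ge0 (sqrt_mulD2_le_sqr _ _ h2 lam_le).
apply: le_trans (le_expectation_affine P _ Xi (2 * H%:R - 1)
  (Num.sqrt lam * (H%:R + 2) / 4) _ _ _ mXi Xi_ge0 _ EXi) _.
- lra.
- by rewrite divr_ge0 ?mulr_ge0 ?sqrtr_ge0 //; lra.
- by move=> w; apply: bigmax_supnormV_RLSVI_Q_le => // l t x a; exact: xi_le.
by rewrite lee_fin; lra.
Qed.
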